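(* Let $p \geq 4$ and let $L$ be the Laplacian of the graph $C_\infty \oplus K_p \oplus C_\infty$. Then there exists a linear subspace $E_K \subset l^2$ of dimension $p-3$ such that every $v \in E_K$ satisfies $Lv = pv$ and $v_j = 0$ for all $j \notin \{-p+2,\ldots,-1\}$.
   Context: For an integer $p \geq 3$, the graph $C_\infty \oplus K_p \oplus C_\infty$ has vertex set $\mathbb{Z}$; its edges are every pair of distinct vertices in $\{-p+1,\ldots,0\}$, the edges $\{j,j+1\}$ for all $j \leq -p$, and the edges $\{j,j+1\}$ for all $j \geq 0$. $l^2$ is the real Hilbert space of square-summable real sequences indexed by $\mathbb{Z}$. The Laplacian acts by $(Lv)_i = \deg(i)\, v_i - \sum_{j \sim i} v_j$. *)

From mathcomp Require Import all_boot all_order all_algebra.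
From mathcomp Require Import reals.
Set Implicit Arguments. Unset Strict Implicit. Unset Printing Implicit Defensive.
Import Order.TTheory GRing.Theory Num.Theory.
Local Open Scope ring_scope.

(* Edge relation of C_oo (+) K_p (+) C_oo on vertex set Z. *)
Definition adj (p : nat) (i j : int) : bool :=
  [|| [&& (- (p%:Z) + 1 <= i <= 0), (- (p%:Z) + 1 <= j <= 0) & i != j],
      [&& (j == i + 1) || (i == j + 1) & Num.min i j <= - (p%:Z)] |
      [&& (j == i + 1) || (i == j + 1) & 0 <= Num.min i j]].

(* All neighbours of i lie in the window {i-p, ..., i+p}. *)
Definition win (p : nat) (i : int) (k : 'I_(2 * p + 1)) : int := i - p%:Z + (k : nat)%:Z.

Arguments win : clear implicits.

Definition deg {R : realType} (p : nat) (i : int) : R :=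
  \sum_(k < 2 * p + 1 | adj p i (win p i k)) 1.

Definition Lap {R : realType} (p : nat) (v : int -> R) (i : int) : R :=
  deg p i * v i - \sum_(k < 2 * p + 1 | adj p i (win p i k)) v (win p i k).

Definition in_l2 {R : realType} (v : int -> R) : Prop :=
  exists M : R, forall N : nat, \sum_(k < 2 * N + 1) v ((k : nat)%:Z - N%:Z) ^+ 2 <= M.

Definition subspace_of_dim {R : realType} (E : (int -> R) -> Prop) (n : nat) : Prop :=
  exists b : 'I_n -> (int -> R),
    (forall c : 'I_n -> R, (forall j, \sum_(i < n) c i * b i j = 0) -> forall i, c i = 0) /\
    (forall v, E v <-> exists c : 'I_n -> R, forall j, v j = \sum_(i < n) c i * b i j).

From mathcomp Require Import all_boot all_order all_algebra.
From mathcomp Require Import reals zify.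
Import Order.TTheory GRing.Theory Num.Theory.
Local Open Scope ring_scope.
Set Implicit Arguments. Unset Strict Implicit.

(* The clique vertices -p+2, ..., -1 have no neighbour on the two paths, so they
   have degree p-1 and their neighbourhoods are the clique minus themselves.
   Hence for v supported on them with zero sum over the clique, the neighbour
   sum at a clique vertex i is -v_i: at an inner vertex
   (Lv)_i = (p-1) v_i + v_i = p v_i, while at the two attachment vertices and
   off the clique both sides vanish.  The zero-sum vectors on the p-2 inner
   vertices form a space of dimension p-3, spanned by the differences
   e_j - e_{-1}, -p+2 <= j <= -2. *)

Section SupportedSums.
Variables (R : numDomainType) (T : eqType) (I J : finType).

Lemma sum_inj_delta (f : I -> T) : injective f -> forall t,
  \sum_i ((f i == t)%:R : R) = (t \in codom f)%:R.
Proof.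
move=> f_inj t; case: codomP => [[i0 ->] | no_pre].
  rewrite (bigD1 i0) //= eqxx big1 ?addr0 // => i ne_i.
  by rewrite (inj_eq f_inj) (negbTE ne_i).
by rewrite big1 // => i _; case: eqP => // eq_i; case: no_pre; exists i.
Qed.

Variables (g : J -> T) (G : T -> R).
Hypotheses (g_inj : injective g) (G_supp : forall t, G t != 0 -> t \in codom g).

Lemma expand_supported t : G t = \sum_j (t == g j)%:R * G (g j).
Proof.
case: (eqVneq (G t) 0) => [Gt0 | /G_supp /codomP [j0 ->]].
  by rewrite Gt0 big1 // => j _; case: eqP => [<- | _]; rewrite ?Gt0 ?mulr0 ?mul0r.
by rewrite (bigD1 j0) //= eqxx mul1r big1 ?addr0 // => j ne_j;
  rewrite (inj_eq g_inj) eq_sym (negPf ne_j) mul0r.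
Qed.

Lemma sum_supported (f : I -> T) : injective f ->
  \sum_i G (f i) = \sum_j (g j \in codom f)%:R * G (g j).
Proof.
move=> f_inj; under eq_bigr => i _ do rewrite expand_supported.
rewrite exchange_big; apply: eq_bigr => j _.
by rewrite -big_distrl sum_inj_delta.
Qed.

Lemma sum_supported_eq (f : I -> T) : injective f ->
  (forall j, g j \in codom f) -> \sum_i G (f i) = \sum_j G (g j).
Proof.
by move=> f_inj gf; rewrite sum_supported //; apply: eq_bigr => j _; rewrite gf mul1r.
Qed.

Lemma sum_supported_le (f : I -> T) : injective f -> (forall t, 0 <= G t) ->
  \sum_i G (f i) <= \sum_j G (g j).
Proof.
move=> f_inj G_ge0; rewrite sum_supported //; apply: ler_sum => j _.
by case: (_ \in _); rewrite ?mul1r ?mul0r.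
Qed.

End SupportedSums.

Section IntervalEnumeration.
Variables (n : nat) (a : int) (f : 'I_n -> int).
Hypothesis f_def : forall k, f k = a + (k : nat)%:Z.

Lemma shift_inj : injective f.
Proof. by move=> k1 k2; rewrite !f_def => /addrI /eqP; rewrite eqz_nat => /eqP/val_inj. Qed.

Lemma shift_range k : a <= f k < a + n%:Z.
Proof. by rewrite f_def; have := ltn_ord k; lia. Qed.

Lemma shift_codom x : a <= x < a + n%:Z -> x \in codom f.
Proof.
move=> x_range; have lt_xn : (absz (x - a) < n)%N by lia.
by apply/codomP; exists (Ordinal lt_xn); rewrite f_def /=; lia.
Qed.

End IntervalEnumeration.

Lemma in_l2_supported (R : realType) (J : finType) (g : J -> int) (v : int -> R) :
  injective g -> (forall j, v j != 0 -> j \in codom g) -> in_l2 v.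
Proof.
move=> g_inj v_supp; exists (\sum_j v (g j) ^+ 2) => N.
apply: (sum_supported_le (G := fun j => v j ^+ 2)) => //.
- by move=> j; rewrite sqrf_eq0; exact: v_supp.
- by move=> k1 k2 /addIr /eqP; rewrite eqz_nat => /eqP /val_inj.
- by move=> j; exact: sqr_ge0.
Qed.

Definition clique_vertex (p : nat) (m : 'I_p) : int := - (p%:Z) + 1 + (m : nat)%:Z.
Arguments clique_vertex : clear implicits.

Lemma clique_vertex_inj p : injective (clique_vertex p).
Proof. exact: shift_inj. Qed.

Lemma clique_vertex_range p m : - (p%:Z) + 1 <= clique_vertex p m <= 0.
Proof. by have := shift_range (fun k => erefl (clique_vertex p k)) m; lia. Qed.

Lemma clique_vertex_codom p j :
  - (p%:Z) + 1 <= j <= 0 -> j \in codom (clique_vertex p).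
Proof. by move=> j_range; apply: (shift_codom (fun k => erefl)); lia. Qed.

Lemma win_inj p i : injective (win p i).
Proof. exact: shift_inj. Qed.

Lemma win_codom p i j : i - p%:Z <= j <= i + p%:Z -> j \in codom (win p i).
Proof. by move=> j_range; apply: (shift_codom (fun k => erefl)); lia. Qed.

Section CliqueAdjacency.
Variable p : nat.

Lemma adj_clique i j : - (p%:Z) + 1 <= i <= 0 -> - (p%:Z) + 1 <= j <= 0 ->
  adj p i j = (j != i).
Proof. by rewrite /adj => i_range j_range; apply/idP/idP; lia. Qed.

Lemma adj_inner i j : - (p%:Z) + 2 <= i <= -1 -> adj p i j -> - (p%:Z) + 1 <= j <= 0.
Proof. by rewrite /adj; lia. Qed.

Lemma adj_off_clique i j : ~~ (- (p%:Z) + 1 <= i <= 0) -> adj p i j ->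
  ~~ (- (p%:Z) + 2 <= j <= -1).
Proof. by rewrite /adj; lia. Qed.

End CliqueAdjacency.

Section CliqueLaplacian.
Variables (R : realType) (p : nat).

Lemma sum_neighbours_clique (G : int -> R) i :
  - (p%:Z) + 1 <= i <= 0 -> (forall j, G j != 0 -> - (p%:Z) + 1 <= j <= 0) ->
  \sum_(k < 2 * p + 1 | adj p i (win p i k)) G (win p i k)
    = \sum_m G (clique_vertex p m) - G i.
Proof.
move=> i_range G_supp; rewrite big_mkcond /=.
rewrite (sum_supported_eq (g := clique_vertex p) (G := fun j => if adj p i j then G j else 0)).
- have /codomP [m0 ->] := clique_vertex_codom i_range.
  rewrite [X in _ = X - _](bigD1 m0) //= addrAC subrr add0r [RHS]big_mkcond /=.
  apply: eq_bigr => m _; rewrite adj_clique ?clique_vertex_range //.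
  by rewrite (inj_eq (@clique_vertex_inj p)).
- exact: clique_vertex_inj.
- move=> j; case: ifP => [_ /G_supp | _]; last by rewrite eqxx.
  exact: clique_vertex_codom.
- exact: win_inj.
- by move=> m; apply: win_codom; have := clique_vertex_range m; lia.
Qed.

Lemma deg_inner i : - (p%:Z) + 2 <= i <= -1 -> deg p i = p%:R - 1 :> R.
Proof.
move=> i_inner; pose in_clique (j : int) : R := (- (p%:Z) + 1 <= j <= 0)%R%:R.
transitivity (\sum_(k < 2 * p + 1 | adj p i (win p i k)) in_clique (win p i k)).
  by apply: eq_bigr => k /(adj_inner i_inner); rewrite /in_clique => ->.
rewrite sum_neighbours_clique; last 2 first.
- lia.
- by move=> j; rewrite /in_clique; case: (_ <= j <= _); rewrite ?eqxx.
rewrite /in_clique; have -> : - (p%:Z) + 1 <= i <= 0 by lia.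
under eq_bigr => m _ do rewrite clique_vertex_range.
by rewrite sumr_const card_ord.
Qed.

Lemma Lap_clique_zero_sum (v : int -> R) :
  (forall j, ~~ (- (p%:Z) + 2 <= j <= -1) -> v j = 0) ->
  \sum_m v (clique_vertex p m) = 0 ->
  forall i, Lap p v i = p%:R * v i.
Proof.
move=> v_supp v_sum i; rewrite /Lap.
case: (boolP (- (p%:Z) + 1 <= i <= 0)) => i_clique; last first.
  rewrite v_supp ?big1 ?mulr0 ?subr0 //; last by lia.
  by move=> k /(adj_off_clique i_clique) /v_supp.
rewrite sum_neighbours_clique //; last first.
  by move=> j; apply: contraR => j_out; rewrite v_supp //; lia.
rewrite v_sum sub0r opprK.
case: (boolP (- (p%:Z) + 2 <= i <= -1)) => i_inner.
  by rewrite deg_inner // mulrBl mul1r subrK.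
by rewrite v_supp // !mulr0 addr0.
Qed.

End CliqueLaplacian.

Section InnerBasis.
Variables (R : realType) (p : nat).

Definition inner_vertex (i : 'I_(p - 3)) : int := - (p%:Z) + 2 + (i : nat)%:Z.

Definition inner_basis (i : 'I_(p - 3)) (j : int) : R :=
  (j == inner_vertex i)%:R - (j == -1)%:R.

Lemma inner_vertex_range i : - (p%:Z) + 2 <= inner_vertex i <= -2.
Proof. by rewrite /inner_vertex; have := ltn_ord i; lia. Qed.

Lemma inner_basis_supp i j : ~~ (- (p%:Z) + 2 <= j <= -1) -> inner_basis i j = 0.
Proof.
move=> j_out; have := inner_vertex_range i => i_range; rewrite /inner_basis.
have [/negPf -> /negPf ->] : j != inner_vertex i /\ j != -1 by lia.
by rewrite subrr.
Qed.

Lemma sum_clique_inner_basis i : \sum_m inner_basis i (clique_vertex p m) = 0.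
Proof.
have := inner_vertex_range i => i_range; have := @clique_vertex_inj p => cv_inj.
by rewrite sumrB !sum_inj_delta // !clique_vertex_codom ?subrr //; lia.
Qed.

Lemma inner_basis_vertex i i0 : inner_basis i (inner_vertex i0) = (i0 == i)%:R.
Proof.
have := inner_vertex_range i0; rewrite /inner_basis => i0_range.
rewrite (inj_eq (shift_inj (fun k => erefl (inner_vertex k)))).
have /negPf -> : inner_vertex i0 != -1 by lia.
by rewrite subr0.
Qed.

Lemma inner_basis_free (c : 'I_(p - 3) -> R) :
  (forall j, \sum_i c i * inner_basis i j = 0) -> forall i, c i = 0.
Proof.
move=> c_comb0 i0; rewrite -(c_comb0 (inner_vertex i0)).
rewrite (bigD1 i0) //= big1 ?inner_basis_vertex ?eqxx ?mulr1 ?addr0 // => i ne_i.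
by rewrite inner_basis_vertex eq_sym (negPf ne_i) mulr0.
Qed.

Lemma inner_lincomb_supp (c : 'I_(p - 3) -> R) j :
  ~~ (- (p%:Z) + 2 <= j <= -1) -> \sum_i c i * inner_basis i j = 0.
Proof. by move=> j_out; rewrite big1 // => i _; rewrite inner_basis_supp ?mulr0. Qed.

Lemma sum_clique_inner_lincomb (c : 'I_(p - 3) -> R) :
  \sum_m \sum_i c i * inner_basis i (clique_vertex p m) = 0.
Proof.
rewrite exchange_big big1 // => i _.
by rewrite -mulr_sumr sum_clique_inner_basis mulr0.
Qed.

End InnerBasis.

Theorem proposition10 (R : realType) (p : nat) (hp : (4 <= p)%N) :
  exists E : (int -> R) -> Prop,
    (forall v, E v -> in_l2 v) /\
    subspace_of_dim E (p - 3) /\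
    (forall v, E v ->
       (forall i : int, Lap p v i = p%:R * v i) /\
       (forall j : int, ~ (- (p%:Z) + 2 <= j <= -1) -> v j = 0)).
Proof.
pose E v := exists c, forall j, v j = \sum_i c i * @inner_basis R p i j.
have E_supp v : E v -> forall j, ~~ (- (p%:Z) + 2 <= j <= -1) -> v j = 0.
  by move=> [c v_def] j j_out; rewrite v_def inner_lincomb_supp.
have E_sum v : E v -> \sum_m v (clique_vertex p m) = 0.
  by move=> [c v_def]; under eq_bigr => m _ do rewrite v_def; apply: sum_clique_inner_lincomb.
exists E; split; [|split].
- move=> v /E_supp v_supp; apply: (in_l2_supported (@clique_vertex_inj p)) => j.
  case: (boolP (- (p%:Z) + 2 <= j <= -1)) => [j_inner _ | /v_supp ->]; last by rewrite eqxx.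
  by apply: clique_vertex_codom; lia.
- by exists (@inner_basis R p); split; [exact: inner_basis_free | move=> v].
- move=> v Ev; split; first exact: Lap_clique_zero_sum (E_supp v Ev) (E_sum v Ev).
  by move=> j /negP; apply: E_supp.
Qed.
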